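(* For every graph $G$, $\widehat{\Theta}(G)=\rho_T(G)=\rho_{\widehat{T}}(\overline{G})=\Theta(\overline{G})$, where $\overline{G}$ is the complement of $G$.
   Context: Graphs are finite and simple. A graph $G=(V,E)$ is a threshold graph if there exist weights $w:V\to\mathbb{R}$ and a real number $s$ such that for all distinct $i,j\in V$: $w(i)+w(j)\ge s$ iff $ij\in E$. $\Theta(G)$ is the least $k\ge 1$ such that there exist threshold graphs $(V,E_1),\dots,(V,E_k)$ with each $E_i\subseteq E$ and $\bigcup_i E_i=E$. $\widehat{\Theta}(G)$ is the least $k\ge1$ such that there exist threshold graphs $(V,E_1),\dots,(V,E_k)$ with $\bigcap_i E_i=E$. Min-plus dot product: $u\odot v=\min_i(u_i+v_i)$ on $(\mathbb{R}\cup\{\infty\})^k$; max-plus dot product: $u\,\widehat{\odot}\,v=\max_i(u_i+v_i)$ on $(\mathbb{R}\cup\{-\infty\})^k$. A min-plus (resp. max-plus) $k$-tropical dot product representation of $G$ is a map $f$ from $V$ to $(\mathbb{R}\cup\{\infty\})^k$ (resp. $(\mathbb{R}\cup\{-\infty\})^k$) with threshold $t>0$ such that for distinct $x,y$: $xy\in E$ iff $f(x)\odot f(y)\ge t$ (resp. $f(x)\,\widehat{\odot}\,f(y)\ge t$). $\rho_T(G)$ (resp. $\rho_{\widehat T}(G)$) is the least $k\ge 1$ for which such a min-plus (resp. max-plus) representation exists. *)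

From HB Require Import structures.
From mathcomp Require Import all_boot all_order all_algebra.
From mathcomp Require Import constructive_ereal Rstruct.
From Stdlib Require Rdefinitions.
Notation R := Rdefinitions.R.

Set Implicit Arguments.
Unset Strict Implicit.
Unset Printing Implicit Defensive.
Import Order.TTheory GRing.Theory Num.Theory.
Local Open Scope ring_scope.

Definition simple_graph (T : finType) (e : rel T) : Prop :=
  symmetric e /\ irreflexive e.

Definition compl_graph (T : finType) (e : rel T) : rel T :=
  fun x y => (x != y) && ~~ e x y.

Definition is_threshold (T : finType) (E' : rel T) : Prop :=
  exists (w : T -> R) (s : R),
    forall x y : T, x != y -> (s <= w x + w y) = E' x y.

Definition theta_cover (T : finType) (e : rel T) (k : nat) : Prop :=
  exists Es : 'I_k -> rel T,
    (forall i, is_threshold (Es i)) /\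
    (forall i x y, x != y -> Es i x y -> e x y) /\
    (forall x y, x != y -> e x y -> exists i, Es i x y).

Definition theta_hat_cover (T : finType) (e : rel T) (k : nat) : Prop :=
  exists Es : 'I_k -> rel T,
    (forall i, is_threshold (Es i)) /\
    (forall x y, x != y -> (e x y <-> forall i, Es i x y)).

Definition to_pinf (a : option R) : \bar R :=
  if a is Some r then r%:E else +oo%E.
Definition to_ninf (a : option R) : \bar R :=
  if a is Some r then r%:E else -oo%E.

Definition minplus_dot (k : nat) (u v : 'I_k -> option R) : \bar R :=
  \big[Order.min/+oo%E]_(i < k) (to_pinf (u i) + to_pinf (v i))%E.

Definition maxplus_dot (k : nat) (u v : 'I_k -> option R) : \bar R :=
  \big[Order.max/-oo%E]_(i < k) (to_ninf (u i) + to_ninf (v i))%E.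

Definition minplus_rep (T : finType) (e : rel T) (k : nat) : Prop :=
  exists (f : T -> 'I_k -> option R) (t : R), 0 < t /\
    forall x y : T, x != y -> (e x y <-> (t%:E <= minplus_dot (f x) (f y))%E).

Definition maxplus_rep (T : finType) (e : rel T) (k : nat) : Prop :=
  exists (f : T -> 'I_k -> option R) (t : R), 0 < t /\
    forall x y : T, x != y -> (e x y <-> (t%:E <= maxplus_dot (f x) (f y))%E).

Definition least_pos (P : nat -> Prop) (k : nat) : Prop :=
  ((1 <= k)%N /\ P k /\ forall j : nat, (1 <= j)%N -> P j -> (k <= j)%N)%type.

From HB Require Import structures.
From mathcomp Require Import all_boot all_order all_algebra.
From mathcomp Require Import constructive_ereal Rstruct boolp.
From mathcomp Require Import lra.

(* A min-plus (max-plus) representation is the same thing as a family of threshold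
   graphs whose intersection (union) is the graph: coordinate i of the vectors
   gives the threshold graph [f_i(x) + f_i(y) >= t], an infinite coordinate being
   replaced by a large enough finite weight, and conversely a threshold graph with
   weights w and threshold s is coordinate [w + (t - s)/2]. Complementing a
   threshold graph gives a threshold graph (move the threshold into the gap below
   it), so intersections for G are unions for its complement. All four
   parameters are therefore the least k for one property, and that property
   holds for k = |V| + 1 since the stars at the vertices cover any graph. *)

Set Implicit Arguments.
Unset Strict Implicit.
Unset Printing Implicit Defensive.
Import Order.TTheory GRing.Theory Num.Theory.
Local Open Scope ring_scope.

Lemma minplus_dot_geP (k : nat) (u v : 'I_k -> option R) (t : \bar R) :
  reflect (forall i, (t <= to_pinf (u i) + to_pinf (v i))%E)
          (t <= minplus_dot u v)%E.
Proof.
rewrite /minplus_dot.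
apply: (iffP (bigmin_geP _ _ xpredT _)) => [[_ tF] i | tF]; first exact: tF.
by split=> [|i _]; [exact: leey | exact: tF].
Qed.

Lemma maxplus_dot_geP (k : nat) (u v : 'I_k -> option R) (t : R) :
  reflect (exists i, (t%:E <= to_ninf (u i) + to_ninf (v i))%E)
          (t%:E <= maxplus_dot u v)%E.
Proof.
rewrite /maxplus_dot.
apply: (iffP (bigmax_geP _ xpredT _ _)) => [[|[i _ tF]] | [i tF]].
- by rewrite leeNy_eq.
- by exists i.
- by right; exists i.
Qed.

Lemma gap_below (F : realFieldType) (l : seq F) (s : F) :
  exists2 m, m < s & forall v, v \in l -> v < s -> v <= m.
Proof.
elim: l => [|v l [m ms lm]]; first by exists (s - 1) => //; lra.
have [vs | sv] := ltP v s.
- exists (Num.max m v) => [|u]; first by rewrite gt_max ms vs.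
  by rewrite in_cons le_max => /orP[/eqP-> | /lm ul /ul ->]; rewrite ?lexx ?orbT.
- exists m => // u; rewrite in_cons => /orP[/eqP-> | /lm //].
  by move=> /lt_le_trans/(_ sv); rewrite ltxx.
Qed.

Lemma threshold_shift (s a b : R) :
  (1 <= (a + (1 - s) / 2) + (b + (1 - s) / 2)) = (s <= a + b).
Proof. by apply/idP/idP => ?; lra. Qed.

Section ThresholdGraphs.
Variable T : finType.

Lemma option_weights_bounded (a : T -> option R) :
  exists2 S : R, 0 <= S & forall x, `|odflt 0 (a x)| <= S.
Proof.
exists (\sum_y `|odflt 0 (a y)|); first by apply: sumr_ge0 => y _.
by move=> x; rewrite (bigD1 x) //= lerDl sumr_ge0.
Qed.

Lemma is_threshold_pinf (a : T -> option R) (t : R) :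
  is_threshold (fun x y => (t%:E <= to_pinf (a x) + to_pinf (a y))%E).
Proof.
have [S S0 aS] := option_weights_bounded a.
exists (fun x => if a x is Some r then r else `|t| + S), t => x y _.
have /andP[tl tr] : - `|t| <= t <= `|t| by rewrite -ler_norml.
move: (aS x) (aS y); rewrite !ler_norml.
case: (a x) => [r|]; case: (a y) => [q|] /= /andP[? ?] /andP[? ?];
  rewrite ?leey ?lee_fin //; apply/esym; lra.
Qed.

Lemma is_threshold_ninf (a : T -> option R) (t : R) :
  is_threshold (fun x y => (t%:E <= to_ninf (a x) + to_ninf (a y))%E).
Proof.
have [S S0 aS] := option_weights_bounded a.
exists (fun x => if a x is Some r then r else - (`|t| + S + 1)), t => x y _.
have /andP[tl tr] : - `|t| <= t <= `|t| by rewrite -ler_norml.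
move: (aS x) (aS y); rewrite !ler_norml.
case: (a x) => [r|]; case: (a y) => [q|] /= /andP[? ?] /andP[? ?];
  rewrite ?leeNy_eq ?lee_fin //; apply/negbTE; rewrite -ltNge; lra.
Qed.

Lemma is_threshold_compl (E : rel T) :
  is_threshold E -> is_threshold (fun x y => ~~ E x y).
Proof.
case=> w [s wE].
have [m ms sumsm] := gap_below [seq w p.1 + w p.2 | p <- enum [set: T * T]] s.
have {}sumsm x y : w x + w y < s -> w x + w y <= m.
  by apply: sumsm; apply/mapP; exists (x, y); rewrite ?mem_enum ?inE.
exists (fun x => - w x), (- m) => x y xy.
rewrite -(wE _ _ xy) -ltNge; apply/idP/idP => [le_sum | /sumsm]; last lra.
by apply: le_lt_trans ms; lra.
Qed.

Lemma is_threshold_empty : is_threshold (fun _ _ : T => false).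
Proof. by exists (fun _ => 0), 1 => x y _; apply/negbTE; rewrite -ltNge addr0 ltr01. Qed.

Definition star_rel (e : rel T) (v : T) : rel T :=
  fun x y => ((x == v) && e v y) || ((y == v) && e v x).

Lemma is_threshold_star (e : rel T) (v : T) : is_threshold (star_rel e v).
Proof.
exists (fun u => if u == v then 2 else if e v u then 0 else -10), 2 => x y xy.
rewrite /star_rel; have [xv | xv] := eqVneq x v; have [yv | yv] := eqVneq y v.
- by move: xy; rewrite xv yv eqxx.
- by rewrite orbF; case: (e v y) => /=; [apply/idP | apply/negbTE; rewrite -ltNge]; lra.
- by case: (e v x) => /=; [apply/idP | apply/negbTE; rewrite -ltNge]; lra.
- by apply/negbTE; rewrite -ltNge; case: (e v x); case: (e v y) => /=; lra.
Qed.

Lemma is_threshold_family (k : nat) (Es : 'I_k -> rel T) :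
  (forall i, is_threshold (Es i)) ->
  exists (w : 'I_k -> T -> R) (s : 'I_k -> R),
    forall i x y, x != y -> (s i <= w i x + w i y) = Es i x y.
Proof.
move=> Ethr; have [ws wsE] := fin_all_exists (fun i => Ethr i).
have [s wE] := fin_all_exists wsE.
by exists ws, s.
Qed.

End ThresholdGraphs.

Section Representations.
Variables (T : finType) (e : rel T) (k : nat).

Lemma theta_hat_cover_compl :
  theta_hat_cover e k <-> theta_cover (compl_graph e) k.
Proof.
split=> [[Es [Ethr eE]] | [Es [Ethr [Ese eEs]]]];
  exists (fun i x y => ~~ Es i x y); (split; first by move=> i; exact: is_threshold_compl).
- split=> [i x y xy nEs | x y xy]; rewrite /compl_graph xy /=.
    by apply: contra nEs => /(eE x y xy).1.
  move=> /negP ne_xy; have [/existsP [i nEs] | ] := boolP [exists i, ~~ Es i x y].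
    by exists i.
  by rewrite negb_exists => /forallP allEs; case: ne_xy; apply/(eE x y xy) => i;
    apply/negPn/allEs.
- move=> x y xy; split=> [exy i | allEs].
    by apply: contraL exy => /(Ese i x y xy); rewrite /compl_graph xy => /negbTE ->.
  apply/negPn/negP => ne_xy.
  have [i Esi] := eEs x y xy (introT andP (conj xy ne_xy)).
  by move: (allEs i); rewrite Esi.
Qed.

Lemma theta_hat_cover_minplus : theta_hat_cover e k <-> minplus_rep e k.
Proof.
split=> [[Es [Ethr eE]] | [f [t [t_gt0 fE]]]].
- have [w [s wE]] := is_threshold_family Ethr.
  pose f x i := Some (w i x + (1 - s i) / 2).
  exists f, 1; split=> [|x y xy]; first exact: ltr01.
  have coordE i : (1%:E <= to_pinf (f x i) + to_pinf (f y i))%E = Es i x y.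
    by rewrite /= -EFinD lee_fin threshold_shift wE.
  rewrite eE //; split=> [allEs | /minplus_dot_geP allE i].
    by apply/minplus_dot_geP => i; rewrite coordE.
  by rewrite -coordE.
- exists (fun i x y => t%:E <= to_pinf (f x i) + to_pinf (f y i))%E.
  split=> [i | x y xy]; first exact: (is_threshold_pinf (fun x => f x i)).
  rewrite fE //; exact: iff_sym (rwP (minplus_dot_geP _ _ _)).
Qed.

Lemma theta_cover_maxplus : theta_cover e k <-> maxplus_rep e k.
Proof.
split=> [[Es [Ethr [Ese eEs]]] | [f [t [t_gt0 fE]]]].
- have [w [s wE]] := is_threshold_family Ethr.
  pose f x i := Some (w i x + (1 - s i) / 2).
  exists f, 1; split=> [|x y xy]; first exact: ltr01.
  have coordE i : (1%:E <= to_ninf (f x i) + to_ninf (f y i))%E = Es i x y.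
    by rewrite /= -EFinD lee_fin threshold_shift wE.
  split=> [/eEs-/(_ xy) [i Esi] | /maxplus_dot_geP [i]].
    by apply/maxplus_dot_geP; exists i; rewrite coordE.
  by rewrite coordE; exact: Ese.
- exists (fun i x y => t%:E <= to_ninf (f x i) + to_ninf (f y i))%E.
  split=> [i | ]; first exact: (is_threshold_ninf (fun x => f x i)).
  split=> [i x y xy Ei | x y xy /(fE x y xy) /maxplus_dot_geP //].
  by apply/(fE x y xy)/maxplus_dot_geP; exists i.
Qed.

End Representations.

Lemma theta_cover_stars (T : finType) (e : rel T) :
  symmetric e -> theta_cover e #|T|.+1.
Proof.
move=> e_sym.
(* One spare index keeps the bound positive when T is empty. *)
exists (fun i : 'I_#|T|.+1 =>
  oapp (star_rel e) (fun _ _ => false) [pick v | enum_rank v == i :> nat]).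
split=> [i | ].
  by case: pickP => [v _ | _]; [exact: is_threshold_star | exact: is_threshold_empty].
split=> [i x y xy | x y _ exy].
  case: pickP => [v _ | _] //=.
  by case/orP=> /andP[/eqP-> //]; rewrite e_sym.
have rank_lt : (enum_rank x < #|T|.+1)%N by apply: ltnW; rewrite ltnS.
exists (inord (enum_rank x)); case: pickP => [v | /(_ x)]; last by rewrite inordK ?eqxx.
by rewrite inordK // => /eqP/val_inj/enum_rank_inj ->; rewrite /= /star_rel eqxx exy.
Qed.

Lemma least_pos_exists (P : nat -> Prop) (n : nat) :
  (1 <= n)%N -> P n -> exists k, least_pos P k.
Proof.
elim/ltn_ind: n => n IH n_gt0 Pn.
have [[j [j_gt0 jn Pj]] | no_smaller] := pselect (exists j, [/\ 1 <= j, j < n & P j]%N).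
  exact: IH j jn j_gt0 Pj.
exists n; split; [done | split=> [// | j j_gt0 Pj]].
by rewrite leqNgt; apply/negP => jn; apply: no_smaller; exists j.
Qed.

Lemma least_pos_ext (P Q : nat -> Prop) (k : nat) :
  (forall j, P j <-> Q j) -> least_pos P k -> least_pos Q k.
Proof.
move=> PQ [k_gt0 [Pk k_min]]; split; [done | split=> [| j j_gt0 /PQ]]; last exact: k_min.
exact/PQ.
Qed.

Theorem mainTheorem9 (T : finType) (e : rel T) :
  simple_graph e ->
  exists k : nat,
    least_pos (theta_hat_cover e) k /\
    least_pos (minplus_rep e) k /\
    least_pos (maxplus_rep (compl_graph e)) k /\
    least_pos (theta_cover (compl_graph e)) k.
Proof.
case=> e_sym _.
have compl_sym : symmetric (compl_graph e).
  by move=> x y; rewrite /compl_graph eq_sym e_sym.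
have [k k_least] := least_pos_exists (ltn0Sn #|T|) (theta_cover_stars compl_sym).
exists k; split; last split; last split; last exact: k_least.
- by apply: least_pos_ext k_least => j; rewrite theta_hat_cover_compl.
- by apply: least_pos_ext k_least => j;
    rewrite -theta_hat_cover_minplus theta_hat_cover_compl.
- by apply: least_pos_ext k_least => j; rewrite theta_cover_maxplus.
Qed.
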